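(* Let $(\mathcal A;\mathcal E)$ be an exact category with exact coproducts and let $\mathcal I$ be a left closed ideal. If $a^j\in\mathcal I$ for all $j$ in a set $J$, then the coproduct morphism $\amalg_j a^j:\amalg_j A^j_0\to\amalg_j A^j_1$ belongs to $\mathcal I$.
   Context: An exact category $(\mathcal A;\mathcal E)$ is an additive category with a class of conflations satisfying the Quillen–Keller axioms; it has exact coproducts if set-indexed coproducts exist and coproducts of conflations are conflations. $\mathrm{Ext}(A,B)$ is the group of conflations $B\to C\to A$. For $a:A_0\to A_1$, $b:B_0\to B_1$, $\mathrm{Ext}(a,b):\mathrm{Ext}(A_1,B_0)\to\mathrm{Ext}(A_0,B_1)$ is pushout along $b$ followed by pullback along $a$. For a class $\mathcal M$ of morphisms, ${}^\perp\mathcal M$ is the ideal of morphisms $a$ with $\mathrm{Ext}(a,m)=0$ for all $m\in\mathcal M$. An ideal is left closed if it is of the form ${}^\perp\mathcal M$ for some class $\mathcal M$ of morphisms. *)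

From HB Require Import structures.
From mathcomp Require Import all_boot all_algebra.
Set Implicit Arguments. Unset Strict Implicit. Unset Printing Implicit Defensive.
Import GRing.Theory.
Local Open Scope ring_scope.

Record preadditive := PreAdditive {
  Obj :> Type;
  Mor : Obj -> Obj -> zmodType;
  comp : forall {X Y Z : Obj}, Mor Y Z -> Mor X Y -> Mor X Z;
  idm : forall X : Obj, Mor X X;
  compA : forall X Y Z W (h : Mor Z W) (g : Mor Y Z) (f : Mor X Y),
      comp h (comp g f) = comp (comp h g) f;
  comp1m : forall X Y (f : Mor X Y), comp (idm Y) f = f;
  compm1 : forall X Y (f : Mor X Y), comp f (idm X) = f;
  compDl : forall X Y Z (g g' : Mor Y Z) (f : Mor X Y),
      comp (g + g') f = comp g f + comp g' f;
  compDr : forall X Y Z (g : Mor Y Z) (f f' : Mor X Y),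
      comp g (f + f') = comp g f + comp g f'
}.

Arguments comp {p X Y Z}.
Arguments idm {p}.

Section Defs.
Variable C : preadditive.

(* additive: a zero object and binary biproducts *)
Definition additive : Prop :=
  (exists Z : C, idm Z = 0) /\
  (forall X Y : C, exists (P : C) (p1 : Mor P X) (p2 : Mor P Y)
                          (i1 : Mor X P) (i2 : Mor Y P),
      [/\ comp p1 i1 = idm X, comp p2 i2 = idm Y &
          comp i1 p1 + comp i2 p2 = idm P]).

Definition is_iso {X Y : C} (f : Mor X Y) : Prop :=
  exists g : Mor Y X, comp g f = idm X /\ comp f g = idm Y.

Definition is_kernel {B X A : C} (i : Mor B X) (d : Mor X A) : Prop :=
  comp d i = 0 /\
  forall (Y : C) (f : Mor Y X), comp d f = 0 -> exists! g : Mor Y B, comp i g = f.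

Definition is_cokernel {B X A : C} (i : Mor B X) (d : Mor X A) : Prop :=
  comp d i = 0 /\
  forall (Y : C) (f : Mor X Y), comp f i = 0 -> exists! g : Mor A Y, comp g d = f.

Definition is_pullback {X A A' : C} (d : Mor X A) (f : Mor A' A)
    (P : C) (d' : Mor P A') (f' : Mor P X) : Prop :=
  comp d f' = comp f d' /\
  forall (Y : C) (u : Mor Y X) (v : Mor Y A'), comp d u = comp f v ->
    exists! w : Mor Y P, comp f' w = u /\ comp d' w = v.
Arguments is_pullback {X A A'} d f P d' f'.

Definition is_pushout {B X B' : C} (i : Mor B X) (f : Mor B B')
    (Q : C) (i' : Mor B' Q) (f' : Mor X Q) : Prop :=
  comp f' i = comp i' f /\
  forall (Y : C) (u : Mor X Y) (v : Mor B' Y), comp u i = comp v f ->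
    exists! w : Mor Q Y, comp w f' = u /\ comp w i' = v.
Arguments is_pushout {B X B'} i f Q i' f'.

Definition confl_class := forall B X A : C, Mor B X -> Mor X A -> Prop.

Variable E : confl_class.

Definition deflation {X A : C} (d : Mor X A) : Prop :=
  exists (B : C) (i : Mor B X), E i d.
Definition inflation {B X : C} (i : Mor B X) : Prop :=
  exists (A : C) (d : Mor X A), E i d.

(* Quillen--Keller axioms (Keller's minimal form) *)
Record is_exact : Prop := {
  ex_kc : forall (B X A : C) (i : Mor B X) (d : Mor X A),
      E i d -> is_kernel i d /\ is_cokernel i d;
  ex_iso : forall (B X A B' X' A' : C) (i : Mor B X) (d : Mor X A)
      (i' : Mor B' X') (d' : Mor X' A')
      (be : Mor B B') (xi : Mor X X') (al : Mor A A'),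
      E i d -> is_kernel i' d' -> is_cokernel i' d' ->
      is_iso be -> is_iso xi -> is_iso al ->
      comp xi i = comp i' be -> comp al d = comp d' xi -> E i' d';
  ex0 : forall Z : C, idm Z = 0 -> deflation (idm Z);
  ex1 : forall (X Y Z : C) (d : Mor X Y) (d' : Mor Y Z),
      deflation d -> deflation d' -> deflation (comp d' d);
  ex2 : forall (X A A' : C) (d : Mor X A) (f : Mor A' A), deflation d ->
      exists (P : C) (d' : Mor P A') (f' : Mor P X),
        is_pullback d f P d' f' /\ deflation d';
  ex2op : forall (B X B' : C) (i : Mor B X) (f : Mor B B'), inflation i ->
      exists (Q : C) (i' : Mor B' Q) (f' : Mor X Q),
        is_pushout i f Q i' f' /\ inflation i'
}.

Definition is_coproduct (J : Type) (F : J -> C) (S : C)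
    (inj : forall j, Mor (F j) S) : Prop :=
  forall (Y : C) (f : forall j, Mor (F j) Y),
    exists! g : Mor S Y, forall j, comp g (inj j) = f j.
Arguments is_coproduct {J} F S inj.

Definition is_coprod_map (J : Type) (A0 A1 : J -> C)
    (a : forall j, Mor (A0 j) (A1 j)) (S0 S1 : C)
    (inj0 : forall j, Mor (A0 j) S0) (inj1 : forall j, Mor (A1 j) S1)
    (s : Mor S0 S1) : Prop :=
  forall j, comp s (inj0 j) = comp (inj1 j) (a j).
Arguments is_coprod_map {J A0 A1} a {S0 S1} inj0 inj1 s.

Definition exact_coproducts : Prop :=
  (forall (J : Type) (F : J -> C), exists (S : C) (inj : forall j, Mor (F j) S),
      is_coproduct F S inj) /\
  (forall (J : Type) (B X A : J -> C) (i : forall j, Mor (B j) (X j))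
      (d : forall j, Mor (X j) (A j)),
      (forall j, E (i j) (d j)) ->
      forall (SB SX SA : C) (injB : forall j, Mor (B j) SB)
        (injX : forall j, Mor (X j) SX) (injA : forall j, Mor (A j) SA),
      is_coproduct B SB injB -> is_coproduct X SX injX -> is_coproduct A SA injA ->
      forall (si : Mor SB SX) (sd : Mor SX SA),
      is_coprod_map i injB injX si -> is_coprod_map d injX injA sd ->
      E si sd).

(* Ext(a,b) = 0 for a : A0 -> A1, b : B0 -> B1: for every conflation
   eta : B0 -i-> X -d-> A1, the conflation a^* b_* eta (pushout along b,
   then pullback along a) is split, i.e. its deflation has a section. *)
Definition ext_zero {A0 A1 B0 B1 : C} (a : Mor A0 A1) (b : Mor B0 B1) : Prop :=
  forall (X : C) (i : Mor B0 X) (d : Mor X A1), E i d ->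
  forall (Q : C) (i2 : Mor B1 Q) (c : Mor X Q), is_pushout i b Q i2 c ->
  forall d2 : Mor Q A1, comp d2 c = d -> comp d2 i2 = 0 ->
  forall (P : C) (d3 : Mor P A0) (p : Mor P Q), is_pullback d2 a P d3 p ->
  exists s : Mor A0 P, comp d3 s = idm A0.

Definition left_perp (M : forall X Y : C, Mor X Y -> Prop)
    {A0 A1 : C} (a : Mor A0 A1) : Prop :=
  forall (B0 B1 : C) (m : Mor B0 B1), M B0 B1 m -> ext_zero a m.

End Defs.

Arguments Mor {p}.
Arguments is_pullback {C X A A'} d f P d' f'.
Arguments is_pushout {C B X B'} i f Q i' f'.
Arguments is_coproduct {C J} F S inj.
Arguments is_coprod_map {C J A0 A1} a {S0 S1} inj0 inj1 s.

From Pilot Require Import Defs.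
From mathcomp Require Import all_boot all_algebra.
From Stdlib Require Import ClassicalEpsilon.
Set Implicit Arguments. Unset Strict Implicit. Unset Printing Implicit Defensive.

(* Splitting of a^* m_* eta only needs, by the pullback property, a lift of a
   through the deflation of m_* eta.  For a = \coprod_j a^j such a lift can be
   built summand by summand: pulling eta back along the j-th coproduct
   injection gives a conflation eta_j with a^j^* m_* eta_j split because a^j
   lies in ^perp M, and the comparison map from m_* eta_j to m_* eta carries
   the resulting lift of a^j to a lift of (\coprod_j a^j) on the j-th summand.
   The universal property of the coproduct glues these lifts together. *)

Local Notation comp := Defs.comp.
Local Notation compA := Defs.compA.

Section Preadditive.
Import GRing.Theory.
Local Open Scope ring_scope.
Variable C : preadditive.

Definition factors_through (X Y Z : C) (d : Mor Y Z) (f : Mor X Z) : Prop :=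
  exists t : Mor X Y, comp d t = f.

Lemma comp0m (X Y Z : C) (f : Mor X Y) : comp (0 : Mor Y Z) f = 0.
Proof. by apply: (addrI (comp 0 f)); rewrite -compDl !addr0. Qed.

Lemma compm0 (X Y Z : C) (f : Mor Y Z) : comp f (0 : Mor X Y) = 0.
Proof. by apply: (addrI (comp f 0)); rewrite -compDr !addr0. Qed.

Lemma is_iso_idm (X : C) : is_iso (idm X).
Proof. by exists (idm X); rewrite comp1m. Qed.

Lemma kernel_cancel (B X A Y : C) (i : Mor B X) (d : Mor X A) (f g : Mor Y B) :
  is_kernel i d -> comp i f = comp i g -> f = g.
Proof.
move=> [i0 iu] eq_fg.
have dif : comp d (comp i f) = 0 by rewrite compA i0 comp0m.
have [w [_ wu]] := iu _ _ dif.
by rewrite -(wu f) // (wu g).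
Qed.

Lemma cokernel_cancel (B X A Y : C) (i : Mor B X) (d : Mor X A) (f g : Mor A Y) :
  is_cokernel i d -> comp f d = comp g d -> f = g.
Proof.
move=> [d0 du] eq_fg.
have fdi : comp (comp f d) i = 0 by rewrite -compA d0 compm0.
have [w [_ wu]] := du _ _ fdi.
by rewrite -(wu f) // (wu g).
Qed.

Lemma kernel_iso (K B X A : C) (k : Mor K X) (i : Mor B X) (d : Mor X A) :
  is_kernel k d -> is_kernel i d -> exists phi : Mor K B, is_iso phi /\ comp i phi = k.
Proof.
move=> kerk keri; have [k0 ku] := kerk; have [i0 iu] := keri.
have [phi [iphi _]] := iu _ k k0.
have [psi [kpsi _]] := ku _ i i0.
exists phi; split=> //; exists psi; split.
- by apply: (kernel_cancel kerk); rewrite compA kpsi iphi compm1.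
- by apply: (kernel_cancel keri); rewrite compA iphi kpsi compm1.
Qed.

Lemma cokernel_iso (B X A A' : C) (i : Mor B X) (e : Mor X A') (d : Mor X A) :
  is_cokernel i e -> is_cokernel i d -> exists al : Mor A' A, is_iso al /\ comp al e = d.
Proof.
move=> cokere cokerd; have [e0 eu] := cokere; have [d0 du] := cokerd.
have [al [ale _]] := eu _ d d0.
have [be [bed _]] := du _ e e0.
exists al; split=> //; exists be; split.
- by apply: (cokernel_cancel cokere); rewrite -compA ale bed comp1m.
- by apply: (cokernel_cancel cokerd); rewrite -compA bed ale comp1m.
Qed.

Lemma pushout_ext (B X B' Q Y : C) (i : Mor B X) (m : Mor B B')
    (i2 : Mor B' Q) (c : Mor X Q) (u v : Mor Q Y) :
  is_pushout i m Q i2 c -> comp u c = comp v c -> comp u i2 = comp v i2 -> u = v.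
Proof.
move=> [po pu] uvc uvi2.
have uci : comp (comp u c) i = comp (comp u i2) m by rewrite -!compA po.
have [w [_ wu]] := pu _ _ _ uci.
by rewrite -(wu u) // (wu v).
Qed.

Lemma pullback_ext (X A A' P Y : C) (d : Mor X A) (g : Mor A' A)
    (d' : Mor P A') (f : Mor P X) (u v : Mor Y P) :
  is_pullback d g P d' f -> comp f u = comp f v -> comp d' u = comp d' v -> u = v.
Proof.
move=> [pb pu] uvf uvd'.
have dfu : comp d (comp f u) = comp g (comp d' u) by rewrite !compA pb.
have [w [_ wu]] := pu _ _ _ dfu.
by rewrite -(wu u) // (wu v).
Qed.

Lemma coproduct_ext (J : Type) (F : J -> C) (S Y : C) (inj : forall j, Mor (F j) S)
    (u v : Mor S Y) :
  is_coproduct F S inj -> (forall j, comp u (inj j) = comp v (inj j)) -> u = v.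
Proof.
move=> coprS uv.
have [w [_ wu]] := coprS _ (fun j => comp u (inj j)).
by rewrite -(wu u) // (wu v).
Qed.

Lemma coproduct_factor (J : Type) (F : J -> C) (S Y Z : C)
    (inj : forall j, Mor (F j) S) (d : Mor Y Z) (f : Mor S Z) :
  is_coproduct F S inj -> (forall j, factors_through d (comp f (inj j))) ->
  factors_through d f.
Proof.
move=> coprS lift.
pose t j := proj1_sig (constructive_indefinite_description _ (lift j)).
have dt j : comp d (t j) = comp f (inj j).
  exact: proj2_sig (constructive_indefinite_description _ (lift j)).
have [g [gt _]] := coprS _ t.
by exists g; apply: (coproduct_ext coprS) => j; rewrite -compA gt dt.
Qed.

Lemma pullback_split_factor (X A A' P : C) (d : Mor X A) (a : Mor A' A)
    (d' : Mor P A') (f : Mor P X) :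
  is_pullback d a P d' f -> (exists s, comp d' s = idm A') <-> factors_through d a.
Proof.
move=> [pb pu]; split=> [[s d's] | [t dt]].
- by exists (comp f s); rewrite compA pb -compA d's compm1.
- have dt1 : comp d t = comp a (idm A') by rewrite dt compm1.
  have [w [[_ d'w] _]] := pu _ _ _ dt1.
  by exists w.
Qed.

Lemma pushout_cokernel (B X A B' Q : C) (i : Mor B X) (d : Mor X A) (m : Mor B B')
    (i2 : Mor B' Q) (c : Mor X Q) (d2 : Mor Q A) :
  is_cokernel i d -> is_pushout i m Q i2 c -> comp d2 c = d -> comp d2 i2 = 0 ->
  is_cokernel i2 d2.
Proof.
move=> [d0 du] popQ d2c d2i2; split=> // Y f fi2.
have fci : comp (comp f c) i = 0 by rewrite -compA (proj1 popQ) compA fi2 comp0m.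
have [g [gd gu]] := du _ (comp f c) fci.
exists g; split.
- apply: (pushout_ext popQ); first by rewrite -compA d2c.
  by rewrite -compA d2i2 compm0.
- by move=> g' g'd2; apply: gu; rewrite -g'd2 -compA d2c.
Qed.

Lemma pushout_deflation_comparison (B B' X X' A A' Q Q' : C)
    (i : Mor B X) (d : Mor X A) (m : Mor B B') (i2 : Mor B' Q) (c : Mor X Q)
    (d2 : Mor Q A) (i' : Mor B X') (d' : Mor X' A') (i2' : Mor B' Q')
    (c' : Mor X' Q') (d2' : Mor Q' A') (f : Mor X' X) (g : Mor A' A) :
  is_pushout i' m Q' i2' c' -> comp d2' c' = d' -> comp d2' i2' = 0 ->
  comp c i = comp i2 m -> comp d2 c = d -> comp d2 i2 = 0 ->
  comp f i' = i -> comp d f = comp g d' ->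
  exists q : Mor Q' Q, comp d2 q = comp g d2'.
Proof.
move=> popQ' d2c' d2i2' ci d2c d2i2 fi' dfg.
have cfi' : comp (comp c f) i' = comp i2 m by rewrite -compA fi'.
have [q [[qc' qi2'] _]] := (proj2 popQ') _ _ _ cfi'.
exists q; apply: (pushout_ext popQ').
- by rewrite -!compA qc' d2c' compA d2c dfg.
- by rewrite -!compA qi2' d2i2' d2i2 compm0.
Qed.

Section Exact.
Variable E : confl_class C.
Hypothesis exE : is_exact E.

Lemma conflation_replace_kernel (B K X A : C) (k : Mor K X) (d : Mor X A)
    (i : Mor B X) :
  E k d -> is_kernel i d -> E i d.
Proof.
move=> Ekd keri.
have [kerk cokerk] := ex_kc exE Ekd.
have [phi [iso_phi iphi]] := kernel_iso kerk keri.
apply: (ex_iso exE Ekd keri _ iso_phi (is_iso_idm X) (is_iso_idm A)).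
- split; first exact: (proj1 keri).
  by move=> Y f fi; apply: (proj2 cokerk); rewrite -iphi compA fi comp0m.
- by rewrite comp1m iphi.
- by rewrite comp1m compm1.
Qed.

Lemma conflation_replace_cokernel (B X A A' : C) (i : Mor B X) (e : Mor X A')
    (d : Mor X A) :
  E i e -> is_cokernel i d -> E i d.
Proof.
move=> Eie cokerd.
have [keri cokere] := ex_kc exE Eie.
have [al [iso_al ale]] := cokernel_iso cokere cokerd.
apply: (ex_iso exE Eie _ cokerd (is_iso_idm B) (is_iso_idm X) iso_al).
- split; first exact: (proj1 cokerd).
  move=> Y f df; apply: (proj2 keri); have [be [beal _]] := iso_al.
  by rewrite -[e]comp1m -beal -(compA be al e) ale -compA df compm0.
- by rewrite comp1m compm1.
- by rewrite compm1.
Qed.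

Lemma pullback_conflation (B X A A' : C) (i : Mor B X) (d : Mor X A) (g : Mor A' A) :
  E i d ->
  exists (X' : C) (i' : Mor B X') (d' : Mor X' A') (f : Mor X' X),
    [/\ E i' d', comp f i' = i & comp d f = comp g d'].
Proof.
move=> Eid.
have keri := proj1 (ex_kc exE Eid).
have [P [d' [f [pbP [K [k Ekd']]]]]] := ex2 exE g (ex_intro _ B (ex_intro _ i Eid)).
have di0 : comp d i = comp g (0 : Mor B A') by rewrite (proj1 keri) compm0.
have [i' [[fi' d'i'] _]] := (proj2 pbP) _ _ _ di0.
exists P, i', d', f; split=> //; last exact: (proj1 pbP).
apply: (conflation_replace_kernel Ekd'); split=> // Y h d'h.
have dfh : comp d (comp f h) = 0 by rewrite compA (proj1 pbP) -compA d'h compm0.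
have [h' [ih' h'u]] := (proj2 keri) _ _ dfh.
exists h'; split.
- apply: (pullback_ext pbP); first by rewrite compA fi'.
  by rewrite compA d'i' comp0m d'h.
- by move=> h'' i'h''; apply: h'u; rewrite -i'h'' compA fi'.
Qed.

Lemma pushout_conflation (B X A B' : C) (i : Mor B X) (d : Mor X A) (m : Mor B B') :
  E i d ->
  exists (Q : C) (i2 : Mor B' Q) (c : Mor X Q) (d2 : Mor Q A),
    [/\ is_pushout i m Q i2 c, comp d2 c = d, comp d2 i2 = 0 & E i2 d2].
Proof.
move=> Eid.
have [[i0 _] cokerd] := ex_kc exE Eid.
have [Q [i2 [c [popQ [A' [e Ei2e]]]]]] := ex2op exE m (ex_intro _ A (ex_intro _ d Eid)).
have di0 : comp d i = comp (0 : Mor B' A) m by rewrite i0 comp0m.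
have [d2 [[d2c d2i2] _]] := (proj2 popQ) _ _ _ di0.
exists Q, i2, c, d2; split=> //.
exact: conflation_replace_cokernel Ei2e (pushout_cokernel cokerd popQ d2c d2i2).
Qed.

Lemma ext_zero_factor (A0 A A1 B0 B1 X Q : C) (a : Mor A0 A) (g : Mor A A1)
    (m : Mor B0 B1) (i : Mor B0 X) (d : Mor X A1) (i2 : Mor B1 Q) (c : Mor X Q)
    (d2 : Mor Q A1) :
  ext_zero E a m -> E i d -> comp c i = comp i2 m -> comp d2 c = d -> comp d2 i2 = 0 ->
  factors_through d2 (comp g a).
Proof.
move=> ext0 Eid ci d2c d2i2.
have [X' [i' [d' [f [Ei'd' fi' dfg]]]]] := pullback_conflation g Eid.
have [Q' [i2' [c' [d2' [popQ' d2c' d2i2' Ei2'd2']]]]] := pushout_conflation m Ei'd'.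
have [q d2q] :=
  pushout_deflation_comparison popQ' d2c' d2i2' ci d2c d2i2 fi' dfg.
have [P' [d3' [p' [pbP' _]]]] :=
  ex2 exE a (ex_intro _ B1 (ex_intro _ i2' Ei2'd2')).
have [t d2't] := (pullback_split_factor pbP').1
  (ext0 _ _ _ Ei'd' _ _ _ popQ' _ d2c' d2i2' _ _ _ pbP').
by exists (comp q t); rewrite compA d2q -compA d2't.
Qed.

End Exact.
End Preadditive.

Theorem lemma5p4 (C : preadditive) (E : confl_class C)
  (HA : additive C) (HE : is_exact E) (HC : exact_coproducts E)
  (I M : forall X Y : C, Mor X Y -> Prop)
  (HI : forall (X Y : C) (f : Mor X Y), I X Y f <-> left_perp E M f)
  (J : Type) (A0 A1 : J -> C) (a : forall j, Mor (A0 j) (A1 j))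
  (Ha : forall j, I (A0 j) (A1 j) (a j))
  (S0 S1 : C) (inj0 : forall j, Mor (A0 j) S0) (inj1 : forall j, Mor (A1 j) S1)
  (H0 : is_coproduct A0 S0 inj0) (H1 : is_coproduct A1 S1 inj1)
  (s : Mor S0 S1) (Hs : is_coprod_map a inj0 inj1 s) :
  I S0 S1 s.
Proof.
apply/HI => B0 B1 m Mm X i d Eid Q i2 c popQ d2 d2c d2i2 P d3 p pbP.
apply/(pullback_split_factor pbP).
apply: (coproduct_factor H0) => j; rewrite Hs.
have ext0 : ext_zero E (a j) m := (HI _ _ _).1 (Ha j) _ _ m Mm.
exact: (ext_zero_factor HE (inj1 j) ext0 Eid (proj1 popQ) d2c d2i2).
Qed.
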